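(* Let $\langle\,,\rangle$ be the bilinear form on $K\{X\}_\infty$ for which the monomials are orthonormal (extended to tensor products by $\langle f_1\otimes f_2,g_1\otimes g_2\rangle=\langle f_1,g_1\rangle\langle f_2,g_2\rangle$), and define $\sqcup\!\sqcup:K\{X\}_\infty\otimes K\{X\}_\infty\to K\{X\}_\infty$ by $\langle g_1\sqcup\!\sqcup g_2,h\rangle=\langle g_1\otimes g_2,\Delta_a(h)\rangle$ for all $h$ (i.e. the graded dual of $\Delta_a$, with $K\{X\}_\infty$ identified with its graded dual via the dual basis of monomials). Then $\sqcup\!\sqcup$ is a commutative associative multiplication with $1\sqcup\!\sqcup1=1$, and for monomials $T^1,T^2$, $$T^1\sqcup\!\sqcup T^2=\sum_{T\text{ a shuffle of }T^1\text{ and }T^2}c_T\,T,$$ where $c_T\ge1$ is the number of subsets $I\subseteq\mathrm{Le}(T)$ with $\mathrm{red}(T|I)=T^1$ and $\mathrm{red}(T|I^c)=T^2$.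
   Context: $K$ is a field of characteristic $0$ and $X=\{x_1,x_2,\dots\}$ a finite or countable set of variables. A planar rooted tree is reduced if no vertex has exactly one incoming edge. $K\{X\}_\infty$ has basis the monomials: the empty tree $1$ and all planar reduced rooted trees with leaves labelled by elements of $X$, graded by number of leaves; for $k\ge2$, $\vee^k$ grafts $k$ nonempty trees (in order) onto a new root, extended multilinearly, with unit conventions (arguments $1$ omitted, $\vee^1=\mathrm{id}$, $\vee^k(1,\dots,1)=1$). The tensor square carries the operations componentwise, and $\Delta_a$ is the unique unital homomorphism with $\Delta_a(x_i)=x_i\otimes1+1\otimes x_i$. $\mathrm{Le}(T)$ is the set of leaves of $T$, $I^c=\mathrm{Le}(T)\setminus I$. The leaf-restriction $T|I$ is obtained from $T$ by deleting every vertex whose full subtree contains no leaf of $I$ (empty tree $1$ if $I=\emptyset$); $\mathrm{red}(S)$ deletes all vertices with exactly one child, keeping labels, the descendant relation and the planar order. $T$ is a shuffle of $T^1$ and $T^2$ if $\mathrm{red}(T|I)=T^1$ and $\mathrm{red}(T|I^c)=T^2$ for some $I\subseteq\mathrm{Le}(T)$. *)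

From HB Require Import structures.
From mathcomp Require Import all_boot all_algebra.
Set Implicit Arguments. Unset Strict Implicit. Unset Printing Implicit Defensive.
Import GRing.Theory.
Local Open Scope ring_scope.

Section Trees.
Variable X : countType.

Inductive tree := Leaf of X | Node of seq tree.

Fixpoint tree_enc (t : tree) : GenTree.tree X :=
  match t with
  | Leaf x => GenTree.Leaf x
  | Node ts => GenTree.Node 0 (map tree_enc ts)
  end.

Fixpoint tree_dec (g : GenTree.tree X) : tree :=
  match g with
  | GenTree.Leaf x => Leaf x
  | GenTree.Node _ gs => Node (map tree_dec gs)
  end.

Lemma tree_encK : cancel tree_enc tree_dec.
Proof.
rewrite /cancel; fix IH 1; case=> [x|ts] //=; congr Node.
elim: ts => //= t ts IHts; by rewrite IH IHts.
Qed.

HB.instance Definition _ := Countable.copy tree (can_type tree_encK).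

Fixpoint reduced (t : tree) : bool :=
  match t with
  | Leaf _ => true
  | Node ts => (1 < size ts)%N && all reduced ts
  end.

(* None is the empty tree 1 *)
Definition reducedo (t : option tree) : bool :=
  if t is Some u then reduced u else true.

(* monomials of K{X}_infty *)
Definition mono := {t : option tree | reducedo t}.

Definition mono1 : mono := exist _ None isT.
Definition monoX (x : X) : mono := exist _ (Some (Leaf x)) isT.

(* grafting with the unit conventions: arguments 1 omitted,
   vee^1 = id, vee^k(1,...,1) = 1 *)
Definition vee_raw (ts : seq (option tree)) : option tree :=
  match pmap id ts with
  | [::] => None
  | [:: t] => Some t
  | l => Some (Node l)
  end.

Lemma vee_raw_reduced (ms : seq mono) : reducedo (vee_raw (map val ms)).
Proof.
rewrite /vee_raw.
have H : all reduced (pmap id (map val ms)).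
  elim: ms => //= -[[t|] Ht] ms IH //=; rewrite IH andbT; exact: Ht.
move: H; case: (pmap id _) => [|t [|u l]] //=; first by rewrite andbT.
Qed.

Definition veem (ms : seq mono) : mono := exist (fun t => reducedo t) _ (vee_raw_reduced ms).

(* Leaves, as positions (paths of child indices from the root), in planar
   (left-to-right) order. *)
Fixpoint leaves (t : tree) : seq (seq nat) :=
  match t with
  | Leaf _ => [:: [::]]
  | Node ts =>
    let fix go (i : nat) (us : seq tree) :=
      match us with
      | [::] => [::]
      | u :: us' => [seq i :: p | p <- leaves u] ++ go i.+1 us'
      end in go 0%N ts
  end.

Definition leaveso (t : option tree) : seq (seq nat) :=
  if t is Some u then leaves u else [::].

(* T|I : delete every vertex whose subtree contains no leaf of I
   (I given as a predicate on leaf positions); None = empty tree *)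
Fixpoint restr (I : seq nat -> bool) (t : tree) : option tree :=
  match t with
  | Leaf x => if I [::] then Some (Leaf x) else None
  | Node ts =>
    let fix go (i : nat) (us : seq tree) :=
      match us with
      | [::] => [::]
      | u :: us' =>
        (if restr (fun p => I (i :: p)) u is Some s then [:: s] else [::])
          ++ go i.+1 us'
      end in
    let l := go 0%N ts in
    if l is [::] then None else Some (Node l)
  end.

Definition restro (I : seq nat -> bool) (t : option tree) : option tree :=
  if t is Some u then restr I u else None.

Fixpoint red (t : tree) : tree :=
  match t with
  | Leaf x => Leaf x
  | Node [:: u] => red u
  | Node ts => Node (map red ts)
  end.

Definition redo (t : option tree) : option tree := omap red t.

(* subsets I of Le(T), encoded as sets of indices into the (duplicate-free)
   list of leaf positions *)
Definition leafpred (t : option tree)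
  (I : {set 'I_(size (leaveso t))}) : seq nat -> bool :=
  fun p => [exists i in I, nth [::] (leaveso t) i == p].

Definition shuffle_by (T1 T2 T : mono)
  (I : {set 'I_(size (leaveso (val T)))}) : bool :=
  (redo (restro (leafpred I) (val T)) == val T1) &&
  (redo (restro (leafpred (~: I)) (val T)) == val T2).

Definition is_shuffle (T1 T2 T : mono) : bool :=
  [exists I : {set 'I_(size (leaveso (val T)))}, @shuffle_by T1 T2 T I].

Definition cT (T1 T2 T : mono) : nat :=
  #|[set I : {set 'I_(size (leaveso (val T)))} | @shuffle_by T1 T2 T I]|.

End Trees.

(* The vector space K{X}_infty and its tensor square, as finite formal *)
(* linear combinations of monomials (resp. pairs of monomials).        *)
Section Vect.
Variables (X : countType) (K : fieldType).

Definition vec := seq (K * mono X).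
Definition vec2 := seq (K * (mono X * mono X)).

Definition coef (v : vec) (m : mono X) : K := \sum_(p <- v | p.2 == m) p.1.
Definition coef2 (v : vec2) (m : mono X * mono X) : K :=
  \sum_(p <- v | p.2 == m) p.1.

Definition vadd (v w : vec) : vec := v ++ w.
Definition vscale (k : K) (v : vec) : vec := [seq (k * p.1, p.2) | p <- v].
Definition vmono (m : mono X) : vec := [:: (1, m)].
Definition vone : vec := vmono (mono1 X).

Definition form (f g : vec) : K :=
  \sum_(p <- f) \sum_(q <- g | p.2 == q.2) p.1 * q.1.
Definition form2 (f g : vec2) : K :=
  \sum_(p <- f) \sum_(q <- g | p.2 == q.2) p.1 * q.1.

Definition tens (f g : vec) : vec2 :=
  [seq (p.1 * q.1, (p.2, q.2)) | p <- f, q <- g].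

Fixpoint cprod (A : Type) (vs : seq (seq A)) : seq (seq A) :=
  match vs with
  | [::] => [:: [::]]
  | v :: vs' => [seq p :: c | p <- v, c <- cprod vs']
  end.

Definition vee (vs : seq vec) : vec :=
  [seq (\prod_(p <- c) p.1, veem (map snd c)) | c <- cprod vs].

Definition vee2 (ws : seq vec2) : vec2 :=
  [seq (\prod_(p <- c) p.1,
        (veem (map (fun p => p.2.1) c), veem (map (fun p => p.2.2) c)))
  | c <- cprod ws].

(* Delta_a on trees: the unique unital homomorphism with
   Delta_a(x) = x (x) 1 + 1 (x) x, computed recursively using
   T = vee^k(T_1, ..., T_k) for a tree with root children T_1..T_k. *)
Fixpoint delta_tree (t : tree X) : vec2 :=
  match t with
  | Leaf x => [:: (1, (monoX x, mono1 X)); (1, (mono1 X, monoX x))]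
  | Node ts => vee2 (map delta_tree ts)
  end.

Definition delta_mono (m : mono X) : vec2 :=
  if val m is Some t then delta_tree t else [:: (1, (mono1 X, mono1 X))].

Definition delta_a (v : vec) : vec2 :=
  flatten [seq [seq (p.1 * q.1, q.2) | q <- delta_mono p.2] | p <- v].

Definition is_dual_of_delta (sh : vec -> vec -> vec) : Prop :=
  forall g1 g2 h : vec, form (sh g1 g2) h = form2 (tens g1 g2) (delta_a h).

End Vect.

(* Every leaf of a tree goes either to the left or to the right tensor factor
   of Delta_a, and the grafting operations act componentwise, so
     Delta_a(T) = sum over I in Le(T) of red(T|I) (x) red(T|I^c).
   Dually, <g1 sh g2, T> = sum over I of <g1, red(T|I)> <g2, red(T|I^c)>.
   This gives the shuffle formula directly, commutativity by exchanging I and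
   I^c, and the unit because T|I and T|I^c cannot both be empty.
   Associativity comes from red(red(T|I)|J) = red(T|J) for J in I: both
   bracketings sum over the ordered partitions of Le(T) into three blocks.
   A dual exists because <g1 sh g2, T> vanishes unless T has at most
   |T1| + |T2| leaves, all labelled by labels of monomials T1, T2 of g1, g2,
   and there are finitely many such reduced trees.
   Subsets of leaves are encoded as bit masks on the left-to-right list of
   leaves. *)

From Pilot Require Import Defs.
From HB Require Import structures.
From mathcomp Require Import all_boot all_algebra.
Set Implicit Arguments. Unset Strict Implicit. Unset Printing Implicit Defensive.
Import GRing.Theory.

Section Pruning.
Variable X : countType.
Notation tree := (tree X).

Lemma tree_ind_mem (P : tree -> Prop) :
  (forall x, P (Leaf x)) ->
  (forall ts, (forall t, t \in ts -> P t) -> P (Node ts)) ->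
  forall t, P t.
Proof.
move=> PL PN; fix IH 1; case=> [x|ts]; first exact: PL.
apply: PN; elim: ts => [|u us IHus] t; first by move=> {IH}; rewrite in_nil.
by rewrite inE => /orP [/eqP ->|]; [exact: IH | exact: IHus].
Qed.

Fixpoint labels (t : tree) : seq X :=
  match t with Leaf x => [:: x] | Node ts => flatten (map labels ts) end.
Definition nleaves (t : tree) := size (labels t).

Definition labelso (t : option tree) := if t is Some u then labels u else [::].
Definition nleaveso (t : option tree) := size (labelso t).

Lemma nleaves_node ts : nleaves (Node ts) = sumn (map nleaves ts).
Proof. by rewrite /nleaves /= size_flatten /shape -map_comp. Qed.

Lemma nleaves_gt0 t : reduced t -> (0 < nleaves t)%N.
Proof.
elim/tree_ind_mem: t => [x|ts IH] //=; rewrite nleaves_node.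
case: ts IH => [|u us] IH //= /andP [_ /andP [Hu _]].
by rewrite (leq_trans (IH u (mem_head _ _) Hu)) // leq_addr.
Qed.

Fixpoint map_segments (A B : Type) (sz : A -> nat) (f : seq bool -> A -> B)
    (b : seq bool) (s : seq A) : seq B :=
  if s is x :: s' then f (take (sz x) b) x :: map_segments sz f (drop (sz x) b) s'
  else [::].

Lemma map_segments_cons (A B : Type) (sz : A -> nat) (f : seq bool -> A -> B) b x s :
  map_segments sz f b (x :: s) = f (take (sz x) b) x :: map_segments sz f (drop (sz x) b) s.
Proof. by []. Qed.

Lemma map_segments_flatten (A B : Type) (sz : A -> nat) f bs (s : seq A) :
  all2 (fun b x => size b == sz x) bs s ->
  map_segments sz f (flatten bs) s = [seq f p.2 p.1 | p <- zip s bs] :> seq B.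
Proof.
elim: s bs => [|x s IH] [|b bs] //= /andP [/eqP <- Hbs].
by rewrite take_size_cat // drop_size_cat // IH.
Qed.

Definition nodeo (l : seq tree) : option tree :=
  if l is [::] then None else Some (Node l).

(* [prune b t] is the restriction [T|I] of [t] to the set [I] of leaves
   selected by the bit mask [b], leaves being listed left to right. *)
Fixpoint prune (b : seq bool) (t : tree) {struct t} : option tree :=
  match t with
  | Leaf x => if head false b then Some (Leaf x) else None
  | Node ts => nodeo (pmap id (map_segments nleaves prune b ts))
  end.

Definition pruneo (b : seq bool) (t : option tree) : option tree :=
  if t is Some u then prune b u else None.

Lemma prune_node b ts : prune b (Node ts) = nodeo (pmap id (map_segments nleaves prune b ts)).
Proof. by []. Qed.

Lemma labelso_nodeo l : labelso (nodeo l) = flatten (map labels l).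
Proof. by case: l. Qed.

Lemma flatten_labels_pmap L :
  flatten (map labels (pmap id L)) = flatten (map labelso L).
Proof. by elim: L => [|[u|] L IH] //=; rewrite IH. Qed.

Lemma labels_prune b t : size b = nleaves t -> labelso (prune b t) = mask b (labels t).
Proof.
elim/tree_ind_mem: t b => [x|ts IH] b; first by case: b => [|[] []].
rewrite nleaves_node prune_node labelso_nodeo flatten_labels_pmap /=.
elim: ts IH b => [|u us IHus] IH b /=; first by case: b.
move=> Hb; have Hu : (nleaves u <= size b)%N by rewrite Hb leq_addr.
rewrite -[in mask b _](cat_take_drop (nleaves u) b) mask_cat ?size_takel //.
rewrite IH ?mem_head ?size_takel //; congr cat.
apply: IHus; last by rewrite size_drop Hb addKn.
by move=> t Ht; apply: IH; rewrite inE Ht orbT.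
Qed.

Lemma nleaveso_prune b t : size b = nleaves t -> nleaveso (prune b t) = count id b.
Proof. by move=> Hb; rewrite /nleaveso labels_prune // size_mask // Hb. Qed.

Lemma red_node ts :
  red (Node ts) = if ts is [:: u] then red u else Node (map (@red X) ts).
Proof. by case: ts => [|u [|v w]]. Qed.

Lemma labels_red t : labels (red t) = labels t.
Proof.
elim/tree_ind_mem: t => [x|ts IH] //; rewrite red_node.
have labels_map : labels (Node (map (@red X) ts)) = labels (Node ts).
  by rewrite /= -map_comp; congr flatten; apply/eq_in_map => t Ht /=; exact: IH.
by case: ts IH labels_map => [|u [|v w]] IH //= _; rewrite cats0 IH ?mem_head.
Qed.

Lemma nleaves_red t : nleaves (red t) = nleaves t.
Proof. by rewrite /nleaves labels_red. Qed.

Lemma redo_nodeo L : redo (nodeo (pmap id L)) = vee_raw (map (@redo X) L).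
Proof.
have pmap_redo : pmap id (map (@redo X) L) = map (@red X) (pmap id L).
  by elim: L => [|[u|] L IH] //=; rewrite IH.
by rewrite /vee_raw pmap_redo; case: (pmap id L) => [|u [|v w]].
Qed.

Lemma reducedo_vee_raw l : all (@reducedo X) l -> reducedo (vee_raw l).
Proof.
rewrite /vee_raw => Hl; have : all (@reduced X) (pmap id l).
  by elim: l Hl => [|[u|] l IH] //= /andP [-> /IH].
by case: (pmap id l) => [|u [|v w]] //= /andP [].
Qed.

Lemma reducedo_red_prune b t : reducedo (redo (prune b t)).
Proof.
elim/tree_ind_mem: t b => [x|ts IH] b; first by rewrite /=; case: ifP.
rewrite prune_node redo_nodeo; apply: reducedo_vee_raw.
elim: ts IH b => [|u us IHus] IH b //=.
rewrite IH ?mem_head //; apply: IHus => t Ht; apply: IH; by rewrite inE Ht orbT.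
Qed.

Lemma reducedo_red_pruneo b t : reducedo (redo (pruneo b t)).
Proof. by case: t => [t|] //; apply: reducedo_red_prune. Qed.

Definition red_restr (b : seq bool) (t : option tree) : mono X :=
  exist (fun t => reducedo t) _ (reducedo_red_pruneo b t).

Lemma labelso_red_restr b t : size b = nleaveso t ->
  labelso (val (red_restr b t)) = mask b (labelso t).
Proof.
case: t => [t|] /= Hb; last by case: b Hb.
by rewrite -labels_prune //; case: (prune b t) => //= s; rewrite labels_red.
Qed.

Lemma nleaveso_red_restr b t : size b = nleaveso t ->
  nleaveso (val (red_restr b t)) = count id b.
Proof. by move=> Hb; rewrite /nleaveso labelso_red_restr // size_mask. Qed.

Definition cut (b : seq bool) (t : option tree) : mono X * mono X :=
  (red_restr b t, red_restr (map negb b) t).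

Lemma cut_neq_unit (t : tree) b : reduced t -> size b = nleaves t ->
  cut b (Some t) != (mono1 X, mono1 X).
Proof.
move=> red_t Hb; rewrite xpair_eqE; apply/negP => /andP [/eqP lft /eqP rgt].
have := nleaves_gt0 red_t; rewrite -Hb -(count_predC id b).
have := @nleaveso_red_restr b (Some t) Hb; rewrite lft => <-.
have := @nleaveso_red_restr (map negb b) (Some t); rewrite size_map rgt count_map => <- //.
Qed.

End Pruning.

Fixpoint bitseqs (n : nat) : seq (seq bool) :=
  if n is n'.+1 then map (cons true) (bitseqs n') ++ map (cons false) (bitseqs n')
  else [:: [::]].

Lemma mem_bitseqs n b : (b \in bitseqs n) = (size b == n).
Proof.
elim: n b => [|n IH] [|c b] //=; rewrite mem_cat.
  by apply/negbTE/negP => /orP [] /mapP [].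
have cons_inj (c' : bool) : injective (cons c') by move=> x y [].
rewrite eqSS -IH; case: c; rewrite (mem_map (cons_inj _)).
  by case: mapP => [[]|]; rewrite ?orbF.
by case: mapP => [[]|].
Qed.

Lemma uniq_bitseqs n : uniq (bitseqs n).
Proof.
elim: n => [|n IH] //=; rewrite cat_uniq !map_inj_uniq ?IH //=; try by move=> x y [].
by rewrite andbT; apply/hasPn => x /mapP [y _ ->]; apply/negP => /mapP [].
Qed.

Lemma bitseqsD m n : bitseqs (m + n) = [seq b ++ c | b <- bitseqs m, c <- bitseqs n].
Proof.
elim: m => [|m IH]; first by rewrite /= cats0 map_id.
by rewrite addSn /= allpairs_cat !allpairs_mapl IH !map_allpairs.
Qed.

Lemma big_bitseqs_negb (R : Type) (idx : R) (op : Monoid.com_law idx) n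
    (F : seq bool -> R) :
  \big[op/idx]_(b <- bitseqs n) F b = \big[op/idx]_(b <- bitseqs n) F (map negb b).
Proof.
elim: n F => [|n IH] F; first by rewrite !big_seq1.
rewrite /= !big_cat !big_map [LHS](Monoid.mulmC op) /=.
by rewrite [in LHS](IH (F \o cons true)) [in LHS](IH (F \o cons false)).
Qed.

Lemma cprod_map (A B C : Type) (g : A -> B -> C) (h : A -> seq B) s :
  cprod [seq map (g x) (h x) | x <- s] =
  [seq [seq g p.1 p.2 | p <- zip s bs] | bs <- cprod (map h s)].
Proof.
elim: s => [|x s IH] //=.
by rewrite IH allpairs_mapl allpairs_mapr map_allpairs.
Qed.

Lemma mem_cprod (A : eqType) (ss : seq (seq A)) c :
  c \in cprod ss -> all2 (fun x s => x \in s) c ss.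
Proof.
elim: ss c => [|s ss IH] c /=; first by rewrite inE => /eqP ->.
by case/allpairsP => -[x c'] /= [Hx Hc ->] /=; rewrite Hx IH.
Qed.

Lemma bitseqs_sumn ns : bitseqs (sumn ns) = map flatten (cprod (map bitseqs ns)).
Proof.
by elim: ns => [|n ns IH] //=; rewrite bitseqsD IH allpairs_mapr map_allpairs.
Qed.

Section LeafSubsets.
Variable X : countType.
Notation tree := (tree X).
Implicit Types (t : tree) (ts : seq tree).

Fixpoint leaves_from (i : nat) (us : seq tree) : seq (seq nat) :=
  if us is u :: us' then [seq i :: p | p <- leaves u] ++ leaves_from i.+1 us'
  else [::].

Lemma leaves_node ts : leaves (Node ts) = leaves_from 0 ts.
Proof. by rewrite /=; elim: ts 0%N => //= u us IH i; rewrite IH. Qed.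

Fixpoint restr_from (I : seq nat -> bool) (i : nat) (us : seq tree) : seq tree :=
  if us is u :: us' then
    (if restr (fun p => I (i :: p)) u is Some s then [:: s] else [::])
      ++ restr_from I i.+1 us'
  else [::].

Lemma restr_node I ts : restr I (Node ts) = nodeo (restr_from I 0 ts).
Proof.
rewrite /=; have -> // : forall i,
    (fix go (i : nat) (us : seq tree) {struct us} : seq tree :=
       match us with
       | [::] => [::]
       | u :: us' =>
           (if restr (fun p => I (i :: p)) u is Some s then [:: s] else [::])
             ++ go i.+1 us'
       end) i ts = restr_from I i ts.
by elim: ts => //= u us IH i; rewrite IH.
Qed.

Lemma size_leaves t : size (leaves t) = nleaves t.
Proof.
elim/tree_ind_mem: t => [x|ts IH] //; rewrite leaves_node nleaves_node.
elim: ts 0%N IH => [|u us IHus] i IH //=.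
rewrite size_cat size_map IH ?mem_head // (IHus i.+1) // => t Ht.
by apply: IH; rewrite inE Ht orbT.
Qed.

Lemma leaves_from_head i us p :
  p \in leaves_from i us -> (0 < size p)%N && (i <= head 0 p)%N.
Proof.
elim: us i => [|u us IH] i //=; rewrite mem_cat => /orP [/mapP [q _ ->] /=|].
  by rewrite leqnn.
by move/IH => /andP [-> /ltnW].
Qed.

Lemma uniq_leaves t : uniq (leaves t).
Proof.
elim/tree_ind_mem: t => [x|ts IH] //; rewrite leaves_node.
elim: ts 0%N IH => [|u us IHus] i IH //=.
rewrite cat_uniq map_inj_uniq ?IH ?mem_head //=; last by move=> x y [].
rewrite IHus ?andbT; last by move=> t Ht; apply: IH; rewrite inE Ht orbT.
apply/hasPn => p /leaves_from_head /andP [_ Hp]; apply/mapP => -[q _ Eq].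
by move: Hp; rewrite Eq /= ltnn.
Qed.

Lemma restr_prune t I : restr I t = prune (map I (leaves t)) t.
Proof.
elim/tree_ind_mem: t I => [x|ts IH] I //; rewrite restr_node leaves_node prune_node.
congr nodeo; elim: ts 0%N IH => [|u us IHus] i IH //=.
rewrite map_cat take_size_cat ?drop_size_cat ?size_map ?size_leaves //.
rewrite IH ?mem_head // -map_comp.
by case: (prune _ u) => [s|] /=; rewrite IHus // => t Ht; apply: IH; rewrite inE Ht orbT.
Qed.

Definition mask_of_set n (I : {set 'I_n}) : seq bool := [seq i \in I | i <- enum 'I_n].

Lemma size_mask_of_set n (I : {set 'I_n}) : size (mask_of_set I) = n.
Proof. by rewrite size_map size_enum_ord. Qed.

Lemma nth_mask_of_set n (I : {set 'I_n}) (i : 'I_n) : nth false (mask_of_set I) i = (i \in I).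
Proof. by rewrite (nth_map i) ?size_enum_ord // nth_ord_enum. Qed.

Lemma mask_of_setC n (I : {set 'I_n}) : mask_of_set (~: I) = map negb (mask_of_set I).
Proof. by rewrite /mask_of_set -map_comp; apply: eq_map => i /=; rewrite in_setC. Qed.

Lemma card_mask_of_set n (P : pred (seq bool)) :
  #|[set I : {set 'I_n} | P (mask_of_set I)]| = count P (bitseqs n).
Proof.
rewrite cardsE cardE /enum_mem size_filter -enumT -(count_map (@mask_of_set n)).
apply/permP/uniq_perm; rewrite ?uniq_bitseqs //.
  rewrite map_inj_uniq ?enum_uniq // => I J EIJ; apply/setP => i.
  by rewrite -!nth_mask_of_set EIJ.
move=> b; rewrite mem_bitseqs; apply/mapP/idP => [[I _ ->]|/eqP Hb].
  by rewrite size_mask_of_set.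
exists [set i : 'I_n | nth false b i]; first by rewrite mem_enum.
apply: (@eq_from_nth _ false); first by rewrite size_mask_of_set.
move=> k; rewrite Hb => Hk; have -> : k = Ordinal Hk by [].
by rewrite nth_mask_of_set inE.
Qed.

Lemma size_leaveso (t : option tree) : size (leaveso t) = nleaveso t.
Proof. by case: t => [t|] //=; apply: size_leaves. Qed.

Lemma uniq_leaveso (t : option tree) : uniq (leaveso t).
Proof. by case: t => [t|] //=; apply: uniq_leaves. Qed.

Lemma map_leafpred (t : option tree) (I : {set 'I_(size (leaveso t))}) :
  map (leafpred I) (leaveso t) = mask_of_set I.
Proof.
apply: (@eq_from_nth _ false); first by rewrite size_map size_mask_of_set.
move=> k; rewrite size_map => Hk; rewrite (nth_map [::]) //.
have -> : k = Ordinal Hk by [].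
rewrite nth_mask_of_set /leafpred; apply/existsP/idP => [[j /andP [jI /eqP Ej]]|kI].
  suff /eqP <- : j == Ordinal Hk by [].
  by rewrite -val_eqE /= -(nth_uniq [::] _ _ (uniq_leaveso t)) ?Ej.
by exists (Ordinal Hk); rewrite kI eqxx.
Qed.

Lemma shuffle_by_mask (T1 T2 T : mono X) I :
  @shuffle_by X T1 T2 T I = (cut (mask_of_set I) (val T) == (T1, T2)).
Proof.
rewrite /shuffle_by xpair_eqE -mask_of_setC; case: T I => [[t|] Ht] I //=.
by rewrite !restr_prune !map_leafpred.
Qed.

Lemma cT_count (T1 T2 T : mono X) :
  cT T1 T2 T = count (fun b => cut b (val T) == (T1, T2)) (bitseqs (nleaveso (val T))).
Proof.
rewrite /cT; under eq_finset => I do rewrite shuffle_by_mask.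
by rewrite (card_mask_of_set _ (fun b => cut b (val T) == (T1, T2))) size_leaveso.
Qed.

Lemma cT_gt0 (T1 T2 T : mono X) : (0 < cT T1 T2 T)%N = is_shuffle T1 T2 T.
Proof.
by rewrite /cT card_gt0; apply/set0Pn/existsP => -[I HI]; exists I; move: HI; rewrite inE.
Qed.

End LeafSubsets.

(* [refine b b'] is the mask of the subset of [b] selected by [b'], i.e. the
   bits of [b'] are placed, in order, at the positions where [b] is true. *)
Fixpoint refine (b b' : seq bool) : seq bool :=
  match b with
  | [::] => [::]
  | c :: b0 => if c then head false b' :: refine b0 (behead b') else false :: refine b0 b'
  end.

Lemma size_refine b b' : size (refine b b') = size b.
Proof. by elim: b b' => [|[] b IH] b' //=; rewrite IH. Qed.

Lemma refine_cat b1 b2 b' :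
  refine (b1 ++ b2) b' =
  refine b1 (take (count id b1) b') ++ refine b2 (drop (count id b1) b').
Proof.
elim: b1 b' => [|[] b1 IH] b' /=; rewrite ?take0 ?drop0 // ?IH //.
by case: b' => [|c b'] //=; rewrite IH.
Qed.

(* Both sides enumerate the ordered partitions of [n] positions into three
   blocks. *)
Lemma sum_refine_assoc (V : nmodType) n (F : seq bool -> seq bool -> seq bool -> V) :
  (\sum_(b <- bitseqs n) \sum_(b' <- bitseqs (count id b))
     F (refine b b') (refine b (map negb b')) (map negb b) =
   \sum_(b <- bitseqs n) \sum_(b' <- bitseqs (count id (map negb b)))
     F b (refine (map negb b) b') (refine (map negb b) (map negb b')))%R.
Proof.
elim: n F => [|n IH] F; first by rewrite !big_seq1.
rewrite /= !big_cat !big_map /=.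
under [X in (X + _)%R = _]eq_bigr => b _ do rewrite /= big_cat !big_map.
under [X in _ = (_ + X)%R]eq_bigr => b _ do rewrite /= big_cat !big_map.
rewrite big_split /= -!addrA.
rewrite (IH (fun A B C => F (true :: A) (false :: B) (false :: C))).
rewrite (IH (fun A B C => F (false :: A) (true :: B) (false :: C))).
rewrite (IH (fun A B C => F (false :: A) (false :: B) (true :: C))).
by rewrite big_split /= addrA.
Qed.

Section Refinement.
Variable X : countType.
Notation tree := (tree X).
Implicit Types (t : tree) (ts : seq tree).

Lemma pruneo_nodeo b l :
  pruneo b (nodeo l) = nodeo (pmap id (map_segments (@nleaves X) (@prune X) b l)).
Proof. by case: l. Qed.

Lemma pmap_map_segments_pruneo b L :
  pmap id (map_segments (@nleaveso X) (@pruneo X) b L) =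
  pmap id (map_segments (@nleaves X) (@prune X) b (pmap id L)).
Proof. by elim: L b => [|[u|] L IH] b //=; rewrite ?drop0 IH. Qed.

Lemma prune_refine t b b' : size b = nleaves t -> size b' = count id b ->
  pruneo b' (prune b t) = prune (refine b b') t.
Proof.
elim/tree_ind_mem: t b b' => [x|ts IH] b b'.
  by case: b => [|[] []] //= _; case: b'.
rewrite nleaves_node !prune_node pruneo_nodeo -pmap_map_segments_pruneo => Hb Hb'.
congr (nodeo (pmap id _)).
elim: ts b b' Hb Hb' IH => [|u us IHus] b b' Hb Hb' IH //.
rewrite !map_segments_cons; have Hu : (nleaves u <= size b)%N by rewrite Hb leq_addr.
move: Hb Hb'; rewrite -(cat_take_drop (nleaves u) b).
move: (take _ b) (drop _ b) (size_takel Hu) => b1 b2 Hb1 Hb Hb'.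
have Hb2 : size b2 = sumn (map (@nleaves X) us).
  by move/eqP: Hb; rewrite size_cat Hb1 /= eqn_add2l => /eqP.
rewrite count_cat in Hb'.
rewrite take_size_cat // drop_size_cat // refine_cat.
rewrite take_size_cat ?size_refine // drop_size_cat ?size_refine //.
rewrite nleaveso_prune // IH ?mem_head ?size_takel ?Hb' ?leq_addr //; congr cons.
apply: IHus => //; first by rewrite size_drop Hb' addKn.
by move=> t Ht; apply: IH; rewrite inE Ht orbT.
Qed.

Lemma redo_prune_red t b : size b = nleaves t -> redo (prune b (red t)) = redo (prune b t).
Proof.
elim/tree_ind_mem: t b => [x|ts IH] b //; rewrite nleaves_node => Hb.
have red_children : redo (prune b (Node (map (@red X) ts))) = redo (prune b (Node ts)).
  rewrite !prune_node !redo_nodeo; congr vee_raw.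
  elim: ts b Hb IH => [|u us IHus] b Hb IH //=.
  have Hu : (nleaves u <= size b)%N by rewrite Hb leq_addr.
  rewrite nleaves_red IH ?mem_head ?size_takel //; congr cons; apply: IHus.
    by rewrite size_drop Hb addKn.
  by move=> t Ht; apply: IH; rewrite inE Ht orbT.
rewrite red_node; case: ts IH Hb red_children => [|u [|v w]] IH Hb red_children //.
rewrite IH ?mem_head //; last by rewrite Hb /= addn0.
by rewrite prune_node /= take_oversize ?Hb /= ?addn0 //; case: (prune b u).
Qed.

Lemma red_restr_refine (t : option tree) b b' :
  size b = nleaveso t -> size b' = count id b ->
  red_restr b' (val (red_restr b t)) = red_restr (refine b b') t.
Proof.
move=> Hb Hb'; apply: val_inj.
case: t Hb => [t|] Hb; last by case: b Hb Hb'.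
rewrite /= -(prune_refine Hb Hb'); case E : (prune b t) => [y|] //=.
by rewrite redo_prune_red //; have := nleaveso_prune Hb; rewrite E Hb'.
Qed.

End Refinement.

Section Coproduct.
Variables (X : countType) (K : fieldType).
Local Open Scope ring_scope.
Implicit Types (t : tree X) (ts : seq (tree X)).

Lemma red_restr_node bs ts :
  all2 (fun b t => size b == nleaves t) bs ts ->
  val (red_restr (flatten bs) (Some (Node ts))) =
  vee_raw [seq val (red_restr p.2 (Some p.1)) | p <- zip ts bs].
Proof.
by move=> Hbs /=; rewrite redo_nodeo map_segments_flatten // -!map_comp.
Qed.

Lemma delta_tree_cuts t :
  delta_tree K t = [seq (1, cut b (Some t)) | b <- bitseqs (nleaves t)].
Proof.
elim/tree_ind_mem: t => [x|ts IH].
  by rewrite /= /cut; congr [:: (_, (_, _)); (_, (_, _))]; apply: val_inj.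
have -> : delta_tree K (Node ts) =
    vee2 [seq [seq (1, cut b (Some t)) | b <- bitseqs (nleaves t)] | t <- ts].
  by congr vee2; apply/eq_in_map.
rewrite /vee2.
rewrite (cprod_map (fun t b => (1, cut b (Some t)))) -map_comp nleaves_node bitseqs_sumn.
rewrite -map_comp -map_comp; apply/eq_in_map => bs /mem_cprod Hbs /=.
have Hsize : all2 (fun b t => size b == nleaves t) bs ts.
  elim: ts bs Hbs {IH} => [|t ts IHts] [|b bs] //= /andP [Hb /IHts ->].
  by rewrite -mem_bitseqs Hb.
rewrite /cut big_map big1 //; congr (_, (_, _)); apply: val_inj.
  by rewrite red_restr_node // /= -!map_comp.
rewrite map_flatten red_restr_node; last first.
  elim: ts bs Hsize {Hbs IH} => [|t ts IHts] [|b bs] //= /andP [Hb /IHts ->].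
  by rewrite size_map Hb.
by congr vee_raw; elim: ts bs {Hbs Hsize IH} => [|t ts IHts] [|b bs] //=; rewrite IHts.
Qed.

Lemma delta_mono_cuts (m : mono X) :
  delta_mono K m = [seq (1, cut b (val m)) | b <- bitseqs (nleaveso (val m))].
Proof.
case: m => [[t|] Ht]; first exact: delta_tree_cuts.
by rewrite /delta_mono /cut; congr [:: (_, (_, _))]; apply: val_inj.
Qed.

Lemma pairing_coefl (M : eqType) (f h : seq (K * M)) :
  \sum_(p <- f) \sum_(q <- h | p.2 == q.2) p.1 * q.1 =
  \sum_(q <- h) (\sum_(p <- f | p.2 == q.2) p.1) * q.1.
Proof.
under eq_bigr => p _ do rewrite big_mkcond.
rewrite exchange_big; apply: eq_bigr => q _; rewrite big_distrl [RHS]big_mkcond.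
by apply: eq_bigr => p _; case: ifP; rewrite ?mul0r.
Qed.

Lemma form_coefl (f h : vec X K) : Defs.form f h = \sum_(q <- h) coef f q.2 * q.1.
Proof. exact: pairing_coefl. Qed.

Lemma form2_coefl (f h : vec2 X K) : form2 f h = \sum_(q <- h) coef2 f q.2 * q.1.
Proof. exact: pairing_coefl. Qed.

Lemma coef2_tens (f g : vec X K) u v : coef2 (tens f g) (u, v) = coef f u * coef g v.
Proof.
rewrite /coef2 big_mkcond big_allpairs_dep /coef big_distrl [RHS]big_mkcond.
apply: eq_bigr => p _ /=; case: (p.2 =P u) => [pu|pu]; last first.
  by rewrite big1 // => r _; rewrite xpair_eqE; case: eqP.
rewrite big_distrr [RHS]big_mkcond; apply: eq_bigr => r _.
by rewrite xpair_eqE pu eqxx; case: ifP; rewrite ?mulr0.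
Qed.

Definition shuffle_coef (f g : vec X K) (m : mono X) : K :=
  \sum_(b <- bitseqs (nleaveso (val m)))
     coef f (red_restr b (val m)) * coef g (red_restr (map negb b) (val m)).

Lemma form2_tens_delta_a (f g h : vec X K) :
  form2 (tens f g) (delta_a h) = \sum_(q <- h) shuffle_coef f g q.2 * q.1.
Proof.
rewrite form2_coefl /delta_a big_flatten big_map; apply: eq_bigr => q _.
rewrite big_map delta_mono_cuts big_map /shuffle_coef big_distrl.
by apply: eq_bigr => b _; rewrite coef2_tens mulr1.
Qed.

Lemma coef_dual sh : is_dual_of_delta sh ->
  forall f g m, coef (sh f g) m = shuffle_coef f g m.
Proof.
move=> dual_sh f g m; have := dual_sh f g (vmono K m).
by rewrite form_coefl form2_tens_delta_a !big_seq1 !mulr1.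
Qed.

End Coproduct.

Section ShuffleCoef.
Variables (X : countType) (K : fieldType).
Local Open Scope ring_scope.
Implicit Types (f g h : vec X K) (m u v : mono X).

Lemma coef_vadd_vscale k f g m :
  coef (vadd (vscale k f) g) m = k * coef f m + coef g m.
Proof. by rewrite /coef big_cat big_map big_distrr. Qed.

Lemma coef_vmono u m : coef (vmono K u) m = (u == m)%:R.
Proof. by rewrite /coef big_mkcond big_seq1 /=; case: eqP. Qed.

Lemma shuffle_coefC f g m : shuffle_coef f g m = shuffle_coef g f m.
Proof.
rewrite /shuffle_coef big_bitseqs_negb; apply: eq_bigr => b _.
by rewrite (mapK negbK) mulrC.
Qed.

Lemma shuffle_coef_linl k f g h m :
  shuffle_coef (vadd (vscale k f) g) h m = k * shuffle_coef f h m + shuffle_coef g h m.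
Proof.
rewrite /shuffle_coef big_distrr -big_split; apply: eq_bigr => b _ /=.
by rewrite coef_vadd_vscale mulrDl mulrA.
Qed.

Lemma shuffle_coef_linr k f g h m :
  shuffle_coef f (vadd (vscale k g) h) m = k * shuffle_coef f g m + shuffle_coef f h m.
Proof. by rewrite !(shuffle_coefC f) shuffle_coef_linl. Qed.

Lemma shuffle_coef_unit m : shuffle_coef (vone X K) (vone X K) m = coef (vone X K) m.
Proof.
rewrite /shuffle_coef /vone coef_vmono; case: m => [[t|] red_t] /=.
  rewrite big_seq big1 // => b; rewrite mem_bitseqs => /eqP Hb.
  have := cut_neq_unit red_t Hb; rewrite /cut => /negbTE cut_neq.
  by rewrite !coef_vmono -natrM mulnb -xpair_eqE eq_sym cut_neq.
rewrite big_seq1 /=; have -> : red_restr [::] None = mono1 X by apply: val_inj.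
by rewrite coef_vmono eqxx mulr1.
Qed.

Lemma shuffle_coef_vmono (T1 T2 T : mono X) :
  shuffle_coef (vmono K T1) (vmono K T2) T = (cT T1 T2 T)%:R.
Proof.
rewrite /shuffle_coef cT_count -sumn_count sumnE big_map natr_sum.
apply: eq_bigr => b _; rewrite !coef_vmono -natrM mulnb -xpair_eqE.
by rewrite eq_sym.
Qed.

Lemma shuffle_coef_red_restr f g (t : option (tree X)) b : size b = nleaveso t ->
  shuffle_coef f g (red_restr b t) =
  \sum_(b' <- bitseqs (count id b))
     coef f (red_restr (refine b b') t) * coef g (red_restr (refine b (map negb b')) t).
Proof.
move=> Hb; rewrite /shuffle_coef nleaveso_red_restr // big_seq [RHS]big_seq.
apply: eq_bigr => b'; rewrite mem_bitseqs => /eqP Hb'.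
by rewrite !red_restr_refine // size_map.
Qed.

Lemma shuffle_assoc sh : is_dual_of_delta sh -> forall f g h m,
  coef (sh (sh f g) h) m = coef (sh f (sh g h)) m.
Proof.
move=> dual_sh f g h m; rewrite !coef_dual // /shuffle_coef.
set n := nleaveso (val m); set c := fun b => red_restr b (val m).
have -> : \sum_(b <- bitseqs n) coef (sh f g) (c b) * coef h (c (map negb b)) =
    \sum_(b <- bitseqs n) \sum_(b' <- bitseqs (count id b))
      coef f (c (refine b b')) * coef g (c (refine b (map negb b'))) * coef h (c (map negb b)).
  rewrite big_seq [RHS]big_seq; apply: eq_bigr => b; rewrite mem_bitseqs => /eqP Hb.
  by rewrite coef_dual // shuffle_coef_red_restr // mulr_suml.
rewrite (sum_refine_assoc _ (fun A B C => coef f (c A) * coef g (c B) * coef h (c C))).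
rewrite big_seq [RHS]big_seq; apply: eq_bigr => b; rewrite mem_bitseqs => /eqP Hb.
rewrite coef_dual // shuffle_coef_red_restr ?size_map // mulr_sumr.
by apply: eq_bigr => b' _; rewrite mulrA.
Qed.

End ShuffleCoef.

Fixpoint seqs_upto (A : Type) (k : nat) (s : seq A) : seq (seq A) :=
  if k is k'.+1 then [::] :: [seq x :: l | x <- s, l <- seqs_upto k' s] else [:: [::]].

Lemma mem_seqs_upto (A : eqType) k (s : seq A) l :
  (l \in seqs_upto k s) = (size l <= k)%N && all (mem s) l.
Proof.
elim: k l => [|k IH] [|x l] //=; rewrite inE /=.
apply/allpairsP/idP => [[[y l'] /= [Hy Hl [-> ->]]]|/andP [Hl /andP [Hx Ha]]].
  by rewrite /= ltnS Hy -IH Hl.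
by exists (x, l); split=> //=; rewrite IH -ltnS Hl Ha.
Qed.

Lemma mem_mask_or_negb (A : eqType) (x : A) s b : size b = size s -> x \in s ->
  (x \in mask b s) || (x \in mask (map negb b) s).
Proof.
elim: s b => [|y s IH] [|c b] //= [Hb]; rewrite inE => /orP [/eqP ->|Hx].
  by case: c; rewrite /= inE eqxx ?orbT.
by case: c; rewrite /= ?inE; case/orP: (IH b Hb Hx) => ->; rewrite ?orbT.
Qed.

Section Support.
Variable X : countType.
Notation tree := (tree X).
Implicit Types (t : tree) (ts : seq tree).

Fixpoint trees_upto (L : seq X) (k : nat) : seq tree :=
  if k is k'.+1 then map (@Leaf X) L ++ map (@Node X) (seqs_upto k' (trees_upto L k'))
  else [::].

Lemma size_le_sumn_nleaves ts : all (fun t => 0 < nleaves t)%N ts ->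
  (size ts <= sumn (map (@nleaves X) ts))%N.
Proof. by elim: ts => [|t ts IH] //= /andP [H1 /IH H2]; rewrite -add1n leq_add. Qed.

Lemma nleaves_lt_sumn ts t : all (fun t => 0 < nleaves t)%N ts -> (1 < size ts)%N ->
  t \in ts -> (nleaves t < sumn (map (@nleaves X) ts))%N.
Proof.
move=> ts_gt0 ts_gt1 Ht; rewrite sumnE big_map (big_rem t) //=.
rewrite -[X in (X < _)%N]addn0 ltn_add2l.
have : (0 < size (rem t ts))%N.
  by rewrite size_rem // -ltnS prednK // (ltn_trans _ ts_gt1).
have rem_gt0 u : u \in rem t ts -> (0 < nleaves u)%N.
  by move/mem_rem; apply: (allP ts_gt0).
case: (rem t ts) rem_gt0 => [|u us] //= H _.
by rewrite big_cons (leq_trans (H u (mem_head _ _))) // leq_addr.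
Qed.

Lemma mem_trees_upto L t k : reduced t -> all (mem L) (labels t) ->
  (nleaves t <= k)%N -> t \in trees_upto L k.+1.
Proof.
elim/tree_ind_mem: t k => [x|ts IH] k /=.
  by move=> _; rewrite andbT => Hx _; rewrite mem_cat map_f.
move=> /andP [ts_gt1 red_ts] HL Hk; rewrite mem_cat; apply/orP; right; apply: map_f.
have ts_gt0 : all (fun t => 0 < nleaves t)%N ts.
  by apply/allP => t Ht; apply: nleaves_gt0; apply: (allP red_ts).
rewrite nleaves_node in Hk.
case: k Hk => [|k] Hk.
  have := leq_trans (size_le_sumn_nleaves ts_gt0) Hk.
  by rewrite leqn0 size_eq0 => /eqP ts0; rewrite ts0 in ts_gt1.
rewrite mem_seqs_upto (leq_trans (size_le_sumn_nleaves ts_gt0)) //=; apply/allP => t Ht.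
apply: IH => //; first exact: (allP red_ts).
  apply/allP => x Hx; apply: (allP HL); apply/flattenP.
  by exists (labels t) => //; exact: map_f.
by rewrite -ltnS (leq_trans (nleaves_lt_sumn ts_gt0 ts_gt1 Ht)).
Qed.

Definition shuffle_support (u v : mono X) : seq (mono X) :=
  pmap insub (None :: map Some (trees_upto (labelso (val u) ++ labelso (val v))
                                          (nleaveso (val u) + nleaveso (val v)).+1)).

Lemma mem_shuffle_support (m : mono X) b : size b = nleaveso (val m) ->
  m \in shuffle_support (red_restr b (val m)) (red_restr (map negb b) (val m)).
Proof.
set u := red_restr b (val m); set v := red_restr (map negb b) (val m) => Hb.
have labels_uv : {subset labelso (val m) <= labelso (val u) ++ labelso (val v)}.
  move=> x Hx; rewrite mem_cat !labelso_red_restr ?size_map //.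
  exact: mem_mask_or_negb.
have nleaves_uv : nleaveso (val m) = nleaveso (val u) + nleaveso (val v).
  by rewrite !nleaveso_red_restr ?size_map // count_map count_predC Hb.
rewrite /shuffle_support mem_pmap -[Some m]valK; apply: map_f.
move: labels_uv nleaves_uv; rewrite -/(nleaveso (val u)) -/(nleaveso (val v)).
move: (_ ++ _) (_ + _)%N => L k labels_L nleaves_k {u v}.
case: m Hb labels_L nleaves_k => [[t|] red_t] _ labels_L nleaves_k; last exact: mem_head.
rewrite in_cons; apply/orP; right; apply: map_f; apply: mem_trees_upto => //; first exact/allP.
by rewrite -nleaves_k.
Qed.

End Support.

Section ShuffleExists.
Variables (X : countType) (K : fieldType).
Local Open Scope ring_scope.
Implicit Types (f g h : vec X K) (m : mono X).

Definition shuffle_candidates f g : seq (mono X) :=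
  undup (flatten [seq shuffle_support u v | u <- map snd f, v <- map snd g]).

Definition shuffle f g : vec X K :=
  [seq (shuffle_coef f g m, m) | m <- shuffle_candidates f g].

Lemma coef_supp f m : coef f m != 0 -> m \in map snd f.
Proof.
apply: contraNT => m_notin; rewrite /coef big_seq_cond big1 // => p /andP [Hp /eqP pm].
by move: m_notin; rewrite -pm map_f.
Qed.

Lemma shuffle_coef_eq0 f g m : m \notin shuffle_candidates f g -> shuffle_coef f g m = 0.
Proof.
move=> m_notin; rewrite /shuffle_coef big_seq big1 // => b; rewrite mem_bitseqs => /eqP Hb.
apply/eqP; rewrite mulf_eq0; apply: contraR m_notin => /norP [/coef_supp Hu /coef_supp Hv].
rewrite mem_undup; apply/flattenP; eexists; first exact: allpairs_f Hu Hv.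
exact: mem_shuffle_support.
Qed.

Lemma coef_shuffle f g m : coef (shuffle f g) m = shuffle_coef f g m.
Proof.
rewrite /coef /shuffle big_map.
have [m_in|m_notin] := boolP (m \in shuffle_candidates f g).
  by rewrite -big_filter (filter_pred1_uniq (undup_uniq _) m_in) big_seq1.
rewrite shuffle_coef_eq0 // big1_seq // => u /= /andP [/eqP um].
by rewrite um (negbTE m_notin).
Qed.

Lemma shuffle_dual : is_dual_of_delta shuffle.
Proof.
move=> f g h; rewrite form_coefl form2_tens_delta_a.
by apply: eq_bigr => q _; rewrite coef_shuffle.
Qed.

End ShuffleExists.

Local Open Scope ring_scope.

Theorem proposition4p6p1 (X : countType) (K : fieldType)
    (charK0 : [pchar K] =i pred0) :
  (exists sh : vec X K -> vec X K -> vec X K, is_dual_of_delta sh) /\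
  (forall sh : vec X K -> vec X K -> vec X K, is_dual_of_delta sh ->
     (* bilinear *)
     (forall (k : K) (a b c : vec X K),
        coef (sh (vadd (vscale k a) b) c) =1
        (fun m => k * coef (sh a c) m + coef (sh b c) m)) /\
     (forall (k : K) (a b c : vec X K),
        coef (sh a (vadd (vscale k b) c)) =1
        (fun m => k * coef (sh a b) m + coef (sh a c) m)) /\
     (* commutative *)
     (forall a b : vec X K, coef (sh a b) =1 coef (sh b a)) /\
     (* associative *)
     (forall a b c : vec X K,
        coef (sh (sh a b) c) =1 coef (sh a (sh b c))) /\
     (* unit *)
     coef (sh (vone X K) (vone X K)) =1 coef (vone X K) /\
     (* shuffle formula *)
     (forall T1 T2 : mono X,
        coef (sh (vmono K T1) (vmono K T2)) =1
        (fun T => if is_shuffle T1 T2 T then (cT T1 T2 T)%:R else 0)) /\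
     (forall T1 T2 T : mono X, is_shuffle T1 T2 T -> (1 <= cT T1 T2 T)%N)).
Proof.
split; first by exists (@shuffle X K); exact: shuffle_dual.
move=> sh dual_sh; have coefE := coef_dual dual_sh.
split; [|split; [|split; [|split; [|split; [|split]]]]].
- by move=> k a b c m; rewrite !coefE shuffle_coef_linl.
- by move=> k a b c m; rewrite !coefE shuffle_coef_linr.
- by move=> a b m; rewrite !coefE shuffle_coefC.
- exact: shuffle_assoc.
- by move=> m; rewrite coefE shuffle_coef_unit.
- move=> T1 T2 T; rewrite coefE shuffle_coef_vmono -cT_gt0.
  by case: posnP => [->|].
- by move=> T1 T2 T; rewrite -cT_gt0.
Qed.
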